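(* Let $R$ be a ring, $n$ a positive integer, and let $I$ be a weakly $n$-absorbing ideal of $R$ that is not an $n$-absorbing ideal. Then: (1) $I^{n+1}=\{0\}$; (2) $\sqrt{I}=\mathrm{Nil}(R)$; (3) if $M$ is an $R$-module with $IM=M$, then $M=\{0\}$.
   Context: All rings are commutative with $1\neq0$. A proper ideal $I$ of $R$ is $n$-absorbing if whenever $a_1\cdots a_{n+1}\in I$ with $a_1,\dots,a_{n+1}\in R$, there are $n$ of the $a_i$'s whose product is in $I$; it is weakly $n$-absorbing if this holds whenever $0\neq a_1\cdots a_{n+1}\in I$. $\mathrm{Nil}(R)$ is the ideal of nilpotent elements of $R$. *)

From mathcomp Require Import all_boot all_algebra.
Set Implicit Arguments. Unset Strict Implicit. Unset Printing Implicit Defensive.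
Import GRing.Theory.
Local Open Scope ring_scope.

Definition is_ideal (R : comNzRingType) (I : {pred R}) : Prop :=
  [/\ 0 \in I,
      (forall x y, x \in I -> y \in I -> x + y \in I) &
      (forall r x, x \in I -> r * x \in I)].

Definition proper_ideal (R : comNzRingType) (I : {pred R}) : Prop :=
  is_ideal I /\ 1 \notin I.

Definition n_absorbing (R : comNzRingType) (n : nat) (I : {pred R}) : Prop :=
  proper_ideal I /\
  forall a : 'I_n.+1 -> R, \prod_(i < n.+1) a i \in I ->
    exists j : 'I_n.+1, \prod_(i < n.+1 | i != j) a i \in I.

Definition weakly_n_absorbing (R : comNzRingType) (n : nat) (I : {pred R}) : Prop :=
  proper_ideal I /\
  forall a : 'I_n.+1 -> R, \prod_(i < n.+1) a i != 0 -> \prod_(i < n.+1) a i \in I ->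
    exists j : 'I_n.+1, \prod_(i < n.+1 | i != j) a i \in I.

Definition in_ideal_pow (R : comNzRingType) (I : {pred R}) (k : nat) (x : R) : Prop :=
  exists (m : nat) (a : 'I_m -> 'I_k -> R),
    (forall i j, a i j \in I) /\ x = \sum_(i < m) \prod_(j < k) a i j.

Definition in_radical (R : comNzRingType) (I : {pred R}) (x : R) : Prop :=
  exists m : nat, x ^+ m \in I.

Definition in_Nil (R : comNzRingType) (x : R) : Prop :=
  exists m : nat, x ^+ m = 0.

Definition in_IM (R : comNzRingType) (I : {pred R}) (M : lmodType R) (v : M) : Prop :=
  exists (m : nat) (r : 'I_m -> R) (w : 'I_m -> M),
    (forall i, r i \in I) /\ v = \sum_(i < m) r i *: w i.

From mathcomp Require Import all_boot all_algebra.
From Stdlib Require Import Classical.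
Set Implicit Arguments. Unset Strict Implicit. Unset Printing Implicit Defensive.
Import GRing.Theory.
Local Open Scope ring_scope.

(* A weakly n-absorbing ideal I that is not n-absorbing has an n-zero: a tuple
   (a_1, ..., a_{n+1}) with product 0 none of whose n-fold subproducts lies in I.
   Adding an element of I to one coordinate of an n-zero yields again an n-zero,
   since its product lands in I and weak absorption forces it to be 0.  By
   multilinearity of the product, the coordinates of an n-zero can therefore be
   replaced one by one by arbitrary elements of I without leaving the zero set,
   so every product of n+1 elements of I vanishes. *)

Section Ideal.
Variables (R : comNzRingType) (I : {pred R}).
Hypothesis idealI : is_ideal I.

Lemma idealD x y : x \in I -> y \in I -> x + y \in I.
Proof. by case: idealI => _ + _; apply. Qed.

Lemma idealMl r x : x \in I -> r * x \in I.
Proof. by case: idealI => _ _; apply. Qed.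

Lemma idealMr r x : x \in I -> x * r \in I.
Proof. by rewrite mulrC; apply: idealMl. Qed.

Lemma idealN x : x \in I -> - x \in I.
Proof. by rewrite -mulN1r; apply: idealMl. Qed.

End Ideal.

Definition n_zero (R : comNzRingType) (n : nat) (I : {pred R}) (a : 'I_n.+1 -> R) :=
  \prod_(i < n.+1) a i = 0 /\ forall j, \prod_(i < n.+1 | i != j) a i \notin I.

Lemma exists_n_zero (R : comNzRingType) (n : nat) (I : {pred R}) :
  weakly_n_absorbing n I -> ~ n_absorbing n I -> exists a : 'I_n.+1 -> R, n_zero I a.
Proof.
move=> [properI wabsI] nabsI; apply: NNPP => no_zero; apply: nabsI.
split=> // a prod_in; apply: NNPP => no_sub.
have sub_notin j : \prod_(i < n.+1 | i != j) a i \notin I.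
  by apply/negP => sub_in; apply: no_sub; exists j.
apply: no_zero; exists a; split=> //; apply/eqP/negPn/negP => prod_neq0.
by have [j] := wabsI a prod_neq0 prod_in; apply/negP.
Qed.

Section NZero.
Variables (R : comNzRingType) (n : nat) (I : {pred R}).
Hypothesis wabsI : weakly_n_absorbing n I.

Notation upd f j v := (@dfwith _ (fun=> R) f j v).

Let idealI : is_ideal I. Proof. by case: wabsI => -[]. Qed.

Lemma prod_upd (f : 'I_n.+1 -> R) j v :
  \prod_i upd f j v i = v * \prod_(i < n.+1 | i != j) f i.
Proof.
rewrite (bigD1 j) //= dfwith_in; congr (_ * _).
by apply: eq_bigr => i ij; rewrite dfwith_out // eq_sym.
Qed.

Lemma prod_upd_add (f : 'I_n.+1 -> R) j u v :
  \prod_i upd f j (u + v) i = \prod_i upd f j u i + \prod_i upd f j v i.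
Proof. by rewrite !prod_upd mulrDl. Qed.

Lemma prod_upd_id (f : 'I_n.+1 -> R) j : \prod_i upd f j (f j) i = \prod_i f i.
Proof. by rewrite prod_upd [RHS](bigD1 j). Qed.

Lemma n_zero_upd (a : 'I_n.+1 -> R) j y :
  n_zero I a -> y \in I -> n_zero I (upd a j (a j + y)).
Proof.
move=> [prod0 sub_notin] yI.
have sub_notin' l : \prod_(i < n.+1 | i != l) upd a j (a j + y) i \notin I.
  have [<-|jl] := eqVneq j l.
    by rewrite (eq_bigr a) // => i ij; rewrite dfwith_out // eq_sym.
  rewrite (bigD1 j jl) /= dfwith_in (eq_bigr a); last first.
    by move=> i /andP[_ ij]; rewrite dfwith_out // eq_sym.
  apply: contra (sub_notin l); rewrite (bigD1 j jl) /= mulrDl.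
  set Q := \prod_(i < n.+1 | _) _ => sumI.
  by rewrite -(addrK (y * Q) (a j * Q)) idealD // idealN // idealMr.
split=> //; apply/eqP/negPn/negP => prod_neq0.
have prod_in : \prod_i upd a j (a j + y) i \in I.
  by rewrite prod_upd_add prod_upd_id prod0 add0r prod_upd idealMr.
by have [l] := (wabsI.2 _ prod_neq0 prod_in); apply/negP.
Qed.

Definition splice k (x a : 'I_n.+1 -> R) (i : 'I_n.+1) : R :=
  if (i < k)%N then x i else a i.

Lemma splice_upd k x a (j : 'I_n.+1) v : (k <= j)%N ->
  splice k x (upd a j v) =1 upd (splice k x a) j v.
Proof.
move=> kj i; rewrite /splice; have [<-|ji] := eqVneq j i.
  by rewrite !dfwith_in ltnNge kj.
by rewrite !dfwith_out.
Qed.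

Lemma prod_splice_eq0 (x : 'I_n.+1 -> R) : (forall i, x i \in I) ->
  forall k, (k <= n.+1)%N ->
  forall a : 'I_n.+1 -> R, n_zero I a -> \prod_i splice k x a i = 0.
Proof.
move=> xI; elim=> [|k IH] kn a a0; first by rewrite -a0.1; apply: eq_bigr.
pose j := Ordinal kn.
have upd_eq0 v : n_zero I (upd a j v) -> \prod_i upd (splice k x a) j v i = 0.
  move/(IH (ltnW kn)).
  by rewrite (eq_bigr _ (fun i _ => @splice_upd k x a j v (leqnn k) i)).
have split_k : splice k.+1 x a =1 upd (splice k x a) j (x j).
  move=> i; rewrite /splice ltnS leq_eqVlt; have [<-|ji] := eqVneq j i.
    by rewrite dfwith_in eqxx.
  suff /negbTE -> : i != k :> nat by rewrite dfwith_out.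
  by apply: contraNneq ji => ik; apply/eqP/val_inj; rewrite /= ik.
rewrite (eq_bigr _ (fun i _ => split_k i)).
have prod_a : \prod_i upd (splice k x a) j (a j) i = 0.
  have -> : a j = splice k x a j by rewrite /splice ltnn.
  by rewrite prod_upd_id IH // ltnW.
apply: (@addrI _ (\prod_i upd (splice k x a) j (a j) i)).
by rewrite -prod_upd_add upd_eq0 ?prod_a ?addr0 //; apply: n_zero_upd.
Qed.

Lemma prod_ideal_eq0 : ~ n_absorbing n I ->
  forall x : 'I_n.+1 -> R, (forall i, x i \in I) -> \prod_i x i = 0.
Proof.
move=> nabsI x xI; have [a a0] := exists_n_zero wabsI nabsI.
rewrite -(prod_splice_eq0 xI (leqnn _) a0).
by apply: eq_bigr => i _; rewrite /splice ltn_ord.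
Qed.

End NZero.

Section PowerZero.
Variables (R : comNzRingType) (I : {pred R}) (k : nat).
Hypothesis powI0 : forall x : 'I_k -> R, (forall i, x i \in I) -> \prod_i x i = 0.

Lemma ideal_pow_eq0 x : in_ideal_pow I k x -> x = 0.
Proof. by move=> [m [a [aI ->]]]; apply: big1 => i _; apply: powI0. Qed.

Lemma radical_eq_Nil x : is_ideal I -> in_radical I x <-> in_Nil x.
Proof.
move=> [I0 _ _]; split=> [[m xmI]|[m xm0]]; last by exists m; rewrite xm0.
exists (m * k)%N; rewrite exprM -(powI0 (fun=> xmI)).
by rewrite prodr_const card_ord.
Qed.

Definition pow_annihilates (M : lmodType R) l :=
  forall (a : 'I_l -> R) (w : M), (forall j, a j \in I) -> (\prod_j a j) *: w = 0.

Lemma pow_annihilates_pred (M : lmodType R) l : (forall v : M, in_IM I v) ->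
  pow_annihilates M l.+1 -> pow_annihilates M l.
Proof.
move=> IM_full ann a w aI; have [m [r [u [rI ->]]]] := IM_full w.
rewrite scaler_sumr; apply: big1 => i _; rewrite scalerA.
pose b (j : 'I_l.+1) := if unlift ord0 j is Some j' then a j' else r i.
have -> : (\prod_j a j) * r i = \prod_j b j.
  rewrite big_ord_recl /b unlift_none mulrC; congr (_ * _).
  by apply: eq_bigr => j _; rewrite liftK.
by apply: ann => j; rewrite /b; case: (unlift ord0 j).
Qed.

Lemma pow_annihilates_le (M : lmodType R) m : (forall v : M, in_IM I v) ->
  pow_annihilates M m -> forall l, (l <= m)%N -> pow_annihilates M l.
Proof.
move=> IM_full; elim: m => [|m IH] ann l; first by rewrite leqn0 => /eqP ->.
rewrite leq_eqVlt ltnS => /orP[/eqP -> //|].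
by apply: IH; apply: pow_annihilates_pred.
Qed.

Lemma IM_full_eq0 (M : lmodType R) : (forall v : M, in_IM I v) ->
  forall v : M, v = 0.
Proof.
move=> IM_full v.
have annk : pow_annihilates M k by move=> a w aI; rewrite powI0 // scale0r.
have ann0 := pow_annihilates_le IM_full annk (leq0n k).
have := ann0 (fun _ : 'I_0 => 0 : R) v.
by rewrite big_ord0 scale1r; apply; case.
Qed.

End PowerZero.

Theorem mainTheorem5 (R : comNzRingType) (n : nat) (I : {pred R}) :
  (0 < n)%N ->
  weakly_n_absorbing n I -> ~ n_absorbing n I ->
  [/\ (forall x : R, in_ideal_pow I n.+1 x -> x = 0),
      (forall x : R, in_radical I x <-> in_Nil x) &
      (forall M : lmodType R, (forall v : M, in_IM I v) -> forall v : M, v = 0)].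
Proof.
move=> _ wabsI nabsI.
have powI0 := prod_ideal_eq0 wabsI nabsI.
have idealI : is_ideal I by case: wabsI => -[].
split=> [x|x|M].
- exact: ideal_pow_eq0 powI0 x.
- exact: radical_eq_Nil powI0 x idealI.
- exact: IM_full_eq0 powI0 M.
Qed.
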